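(* Let $A,B\in\mathbb{R}^{n\times n}$ be real symmetric with normalizations $\widetilde A,\widetilde B$ satisfying $\mathrm{spec}(\widetilde A),\mathrm{spec}(\widetilde B)\subset[-1,1]$, and let $\eta>0$. Then there is a constant $C_T\le2$ such that for all $k\ge0$, \[ |\mathrm{tr}\,T_k(\widetilde A)-\mathrm{tr}\,T_k(\widetilde B)|\le n\,C_T\,k^2\,\|\widetilde A-\widetilde B\|_2, \] and for any $K\ge1$, \[ \|\phi_K(A)-\phi_K(B)\|_2\le\frac{n}{\|[s_0,\dots,s_{K-1}]\|_2}\Big(\sum_{k=0}^{K-1}e^{-2\eta k}C_T^2k^4\Big)^{1/2}\|\widetilde A-\widetilde B\|_2=\mathcal{O}\big(n\,\eta^{-5/2}\,\|\widetilde A-\widetilde B\|_2\big), \] where $s_k=s_k(A)$.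
   Context: For a real symmetric $M$, $\widetilde M=(M-mI)/r$ with $m=\tfrac12(\lambda_{\max}(M)+\lambda_{\min}(M))$, $r=(1+\varepsilon_{\mathrm{rel}})\tfrac12(\lambda_{\max}(M)-\lambda_{\min}(M))$, fixed $\varepsilon_{\mathrm{rel}}>0$. $T_k$ are Chebyshev polynomials of the first kind ($T_0=1$, $T_1(x)=x$, $T_{k+1}=2xT_k-T_{k-1}$). $s_k(M)=e^{-\eta k}\mathrm{tr}(T_k(\widetilde M))$ and $\phi_K(M)=[s_0(M),\dots,s_{K-1}(M)]/\|[s_0(M),\dots,s_{K-1}(M)]\|_2$. $\|\cdot\|_2$ denotes the spectral norm for matrices and Euclidean norm for vectors. *)

From HB Require Import structures.
From mathcomp Require Import all_boot all_order all_algebra.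
From mathcomp Require Import all_classical all_reals all_analysis.
Set Implicit Arguments. Unset Strict Implicit. Unset Printing Implicit Defensive.
Import Order.TTheory GRing.Theory Num.Theory.
Local Open Scope classical_set_scope.
Local Open Scope ring_scope.

Section Defs.
Variable R : realType.

Fixpoint cheb_pair (k : nat) : {poly R} * {poly R} :=
  match k with
  | 0%N => (1, 'X)
  | k'.+1 => let p := cheb_pair k' in (p.2, 2%:P * 'X * p.2 - p.1)
  end.
Definition cheb (k : nat) : {poly R} := (cheb_pair k).1.

Lemma cheb0 : cheb 0 = 1. Proof. by []. Qed.
Lemma cheb1 : cheb 1 = 'X. Proof. by []. Qed.
Lemma chebSS k : cheb k.+2 = 2%:P * 'X * cheb k.+1 - cheb k.
Proof. by []. Qed.

Variable n : nat.  (* matrices are (n.+1) x (n.+1) *)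

Definition spec (M : 'M[R]_n.+1) : set R := [set a | eigenvalue M a].
Definition lambda_max (M : 'M[R]_n.+1) : R := sup (spec M).
Definition lambda_min (M : 'M[R]_n.+1) : R := inf (spec M).

Definition is_symmetric (M : 'M[R]_n.+1) : Prop := M^T = M.

Definition norm_center (M : 'M[R]_n.+1) : R :=
  (lambda_max M + lambda_min M) / 2.
Definition norm_radius (eps : R) (M : 'M[R]_n.+1) : R :=
  (1 + eps) * ((lambda_max M - lambda_min M) / 2).
Definition normalize (eps : R) (M : 'M[R]_n.+1) : 'M[R]_n.+1 :=
  (norm_radius eps M)^-1 *: (M - (norm_center M)%:M).

Definition cvnorm (x : 'cV[R]_n.+1) : R := Num.sqrt (\sum_i x i 0 ^+ 2).
Definition spnorm (M : 'M[R]_n.+1) : R :=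
  sup [set cvnorm (M *m x) | x in [set x : 'cV[R]_n.+1 | cvnorm x = 1]].

Definition chebmx (k : nat) (M : 'M[R]_n.+1) : 'M[R]_n.+1 := horner_mx M (cheb k).

Definition s_coef (eps eta : R) (M : 'M[R]_n.+1) (k : nat) : R :=
  expR (- eta * k%:R) * \tr (chebmx k (normalize eps M)).

End Defs.

Definition rvnorm (R : realType) (K : nat) (v : 'rV[R]_K) : R :=
  Num.sqrt (\sum_i v 0 i ^+ 2).

Definition s_vec (R : realType) (n : nat) (eps eta : R) (M : 'M[R]_n.+1) (K : nat)
  : 'rV[R]_K := \row_(k < K) s_coef eps eta M k.

Definition phi (R : realType) (n : nat) (eps eta : R) (M : 'M[R]_n.+1) (K : nat)
  : 'rV[R]_K := (rvnorm (s_vec eps eta M K))^-1 *: s_vec eps eta M K.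

From HB Require Import structures.
From mathcomp Require Import all_boot all_order all_algebra.
From mathcomp Require Import all_classical all_reals all_analysis.
From mathcomp Require Import complex ring lra.
Import Order.TTheory GRing.Theory Num.Theory.
Set Implicit Arguments. Unset Strict Implicit. Unset Printing Implicit Defensive.
Local Open Scope classical_set_scope.
Local Open Scope complex_scope.
Local Open Scope sesquilinear_scope.
Local Open Scope ring_scope.

(* Since T_k (cos t) = cos (k t), the polynomial T_k is k^2-Lipschitz on [-1, 1].
   Diagonalizing the two normalized matrices by unitaries M and N, the squared
   moduli of the entries of M N^* form a doubly stochastic matrix which couples
   the two spectra at cost ||A~ - B~||_F^2 <= n ||A~ - B~||_2^2; Cauchy-Schwarz
   then bounds the difference of traces by n k^2 ||A~ - B~||_2.  For phi_K, the
   map s |-> s / ||s|| is (2 / ||s||)-Lipschitz, and since k^4 e^(-eta k) is at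
   most 24 / eta^4, the weighted sum of the k^4 is O(eta^-5). *)

Section Chebyshev.
Variable R : realType.

Lemma cheb_cos (t : R) k : (cheb R k).[cos t] = cos (k%:R * t).
Proof.
suff : (cheb R k).[cos t] = cos (k%:R * t) /\ (cheb R k.+1).[cos t] = cos (k.+1%:R * t).
  by case.
elim: k => [|k [IHk IHk1]].
  by rewrite cheb0 cheb1 hornerC hornerX mul0r cos0 mul1r.
split=> //; rewrite chebSS !hornerE IHk IHk1.
have -> : k.+2%:R * t = k.+1%:R * t + t by rewrite -addn1 natrD mulrDl mul1r.
have -> : k%:R * t = k.+1%:R * t - t by rewrite -addn1 natrD mulrDl mul1r addrK.
rewrite cosB cosD; ring.
Qed.

Lemma norm_sin_mulrn_le (x : R) k : `|sin (k%:R * x)| <= k%:R * `|sin x|.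
Proof.
elim: k => [|k IHk]; first by rewrite !mul0r sin0 normr0.
rewrite -addn1 natrD !mulrDl !mul1r sinD.
apply: le_trans (ler_normD _ _) _; rewrite !normrM.
apply: lerD; first by rewrite -[leRHS]mulr1; apply: ler_pM => //; apply: cos_max.
by rewrite -[leRHS]mul1r ler_wpM2r // cos_max.
Qed.

Lemma cos_sub_cos (x y : R) :
  cos x - cos y = - 2 * sin ((x + y) / 2) * sin ((x - y) / 2).
Proof.
have -> : cos x = cos ((x + y) / 2 + (x - y) / 2) by congr cos; field.
have -> : cos y = cos ((x + y) / 2 - (x - y) / 2) by congr cos; field.
rewrite cosB cosD; ring.
Qed.

(* Writing a = cos al, b = cos be, both sides are products of two sines, and
   each sine of a k-fold angle gains at most a factor k. *)
Lemma cheb_lipschitz k (a b : R) : -1 <= a <= 1 -> -1 <= b <= 1 ->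
  `|(cheb R k).[a] - (cheb R k).[b]| <= k%:R ^+ 2 * `|a - b|.
Proof.
move=> /acos_def[_ <-] /acos_def[_ <-].
set al := acos a; set be := acos b.
rewrite !cheb_cos !cos_sub_cos -!mulrDr -!mulrBr -!mulrA !normrM normrN normr_nat.
set u := (al + be) / 2; set v := (al - be) / 2.
rewrite [leRHS](_ : _ = 2 * ((k%:R * `|sin u|) * (k%:R * `|sin v|))); last by ring.
by rewrite ler_pM2l //; apply: ler_pM; rewrite ?norm_sin_mulrn_le.
Qed.

End Chebyshev.

Lemma sumB_doubly_stochastic (R : pzRingType) (I J : finType) (w : I -> J -> R)
    (f : I -> R) (g : J -> R) :
  (forall i, \sum_j w i j = 1) -> (forall j, \sum_i w i j = 1) ->
  \sum_i f i - \sum_j g j = \sum_i \sum_j w i j * (f i - g j).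
Proof.
move=> row1 col1.
have -> : \sum_i \sum_j w i j * (f i - g j)
    = \sum_i \sum_j w i j * f i - \sum_j \sum_i w i j * g j.
  rewrite [X in _ - X]exchange_big -sumrB; apply: eq_bigr => i _.
  by rewrite -sumrB; apply: eq_bigr => j _; apply: mulrBr.
by congr (_ - _); apply: eq_bigr => k _; rewrite -mulr_suml ?row1 ?col1 mul1r.
Qed.

Lemma weighted_cauchy_schwarz (R : realDomainType) (I : finType) (w x y : I -> R) :
  (forall i, 0 <= w i) ->
  (\sum_i w i * x i * y i) ^+ 2 <= (\sum_i w i * x i ^+ 2) * (\sum_i w i * y i ^+ 2).
Proof.
move=> w_ge0; pose A i := w i * x i ^+ 2; pose B i := w i * y i ^+ 2.
pose C i := w i * x i * y i.
have lagrange : \sum_i \sum_j w i * w j * (x i * y j - x j * y i) ^+ 2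
    = 2 * ((\sum_i A i) * (\sum_i B i) - (\sum_i C i) ^+ 2).
  have -> : \sum_i \sum_j w i * w j * (x i * y j - x j * y i) ^+ 2
      = \sum_i \sum_j A i * B j + \sum_i \sum_j A j * B i
        - 2 * \sum_i \sum_j C i * C j.
    rewrite mulr_sumr -big_split -sumrB /=; apply: eq_bigr => i _.
    rewrite mulr_sumr -big_split -sumrB /=; apply: eq_bigr => j _.
    rewrite /A /B /C; ring.
  by rewrite [X in _ + X - _]exchange_big /= expr2 !big_distrlr; ring.
suff : 0 <= 2 * ((\sum_i A i) * (\sum_i B i) - (\sum_i C i) ^+ 2).
  by rewrite pmulr_rge0 // subr_ge0.
rewrite -lagrange; apply: sumr_ge0 => i _; apply: sumr_ge0 => j _.
exact: mulr_ge0 (mulr_ge0 (w_ge0 i) (w_ge0 j)) (sqr_ge0 _).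
Qed.

Lemma cauchy_schwarz (R : realDomainType) (I : finType) (x y : I -> R) :
  (\sum_i x i * y i) ^+ 2 <= (\sum_i x i ^+ 2) * (\sum_i y i ^+ 2).
Proof.
have /= := weighted_cauchy_schwarz x y (fun=> @ler01 R).
by under eq_bigr do rewrite mul1r; rewrite !(eq_bigr _ (fun i _ => mul1r _)).
Qed.

Lemma weighted_sum_norm_le (R : realDomainType) (I : finType) (w d : I -> R) :
  (forall i, 0 <= w i) ->
  (\sum_i w i * `|d i|) ^+ 2 <= (\sum_i w i) * (\sum_i w i * d i ^+ 2).
Proof.
move=> w_ge0.
have -> : \sum_i w i * `|d i| = \sum_i w i * 1 * `|d i|.
  by apply: eq_bigr => i _; rewrite mulr1.
have -> : \sum_i w i = \sum_i w i * 1 ^+ 2.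
  by apply: eq_bigr => i _; rewrite expr1n mulr1.
have -> : \sum_i w i * d i ^+ 2 = \sum_i w i * `|d i| ^+ 2.
  by apply: eq_bigr => i _; rewrite real_normK ?num_real.
exact: weighted_cauchy_schwarz.
Qed.

Section EuclideanNorm.
Variables (R : realType) (K : nat).
Implicit Types (u v : 'rV[R]_K) (c : R).

Lemma rvnorm_ge0 u : 0 <= rvnorm u.
Proof. exact: sqrtr_ge0. Qed.

Lemma rvnorm_sqr u : rvnorm u ^+ 2 = \sum_i u 0 i ^+ 2.
Proof. by rewrite sqr_sqrtr // sumr_ge0 // => i _; apply: sqr_ge0. Qed.

Lemma rvnorm_le u (b : 'I_K -> R) :
  (forall i, `|u 0 i| <= b i) -> rvnorm u <= Num.sqrt (\sum_i b i ^+ 2).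
Proof.
move=> ub; rewrite ler_sqrt; last by apply: sumr_ge0 => i _; apply: sqr_ge0.
apply: ler_sum => i _; rewrite -[u 0 i ^+ 2]real_normK ?num_real // ler_sqr ?nnegrE //.
exact: le_trans (ub i).
Qed.

Lemma norm_coord_le_rvnorm u i : `|u 0 i| <= rvnorm u.
Proof.
rewrite -ler_sqr ?nnegrE ?rvnorm_ge0 // real_normK ?num_real // rvnorm_sqr (bigD1 i) //=.
by rewrite lerDl sumr_ge0 // => j _; apply: sqr_ge0.
Qed.

Lemma rvnormZ c u : rvnorm (c *: u) = `|c| * rvnorm u.
Proof.
rewrite /rvnorm -sqrtr_sqr -sqrtrM ?sqr_ge0 // mulr_sumr.
by congr Num.sqrt; apply: eq_bigr => i _; rewrite mxE exprMn.
Qed.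

Lemma sum_mul_le_rvnorm u v : \sum_i u 0 i * v 0 i <= rvnorm u * rvnorm v.
Proof.
apply: le_trans (ler_norm _) _.
rewrite -ler_sqr ?nnegrE ?mulr_ge0 ?rvnorm_ge0 // real_normK ?num_real // exprMn !rvnorm_sqr.
exact: cauchy_schwarz.
Qed.

Lemma rvnormD u v : rvnorm (u + v) <= rvnorm u + rvnorm v.
Proof.
rewrite -ler_sqr ?nnegrE ?addr_ge0 ?rvnorm_ge0 // sqrrD !rvnorm_sqr.
rewrite (eq_bigr (fun i => u 0 i ^+ 2 + v 0 i ^+ 2 + 2 * (u 0 i * v 0 i))); last first.
  by move=> i _; rewrite mxE; ring.
rewrite !big_split /= -mulr_sumr; have := sum_mul_le_rvnorm u v; lra.
Qed.

Lemma rvnormN u : rvnorm (- u) = rvnorm u.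
Proof. by rewrite -scaleN1r rvnormZ normrN1 mul1r. Qed.

Lemma rvnorm_dist_le u v : `|rvnorm u - rvnorm v| <= rvnorm (u - v).
Proof.
have := rvnormD (u - v) v; have := rvnormD (v - u) u.
rewrite !subrK -opprB rvnormN ler_norml; lra.
Qed.

Lemma rvnorm_normalized_sub_le u v : 0 < rvnorm u -> 0 < rvnorm v ->
  rvnorm ((rvnorm u)^-1 *: u - (rvnorm v)^-1 *: v) <= 2 * rvnorm (u - v) / rvnorm u.
Proof.
move=> u_gt0 v_gt0; set a := rvnorm u; set b := rvnorm v.
have -> : a^-1 *: u - b^-1 *: v = a^-1 *: (u - v) + (a^-1 - b^-1) *: v.
  by rewrite scalerBr scalerBl addrA subrK.
apply: le_trans (rvnormD _ _) _; rewrite !rvnormZ -/b.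
have -> : `|a^-1 - b^-1| * b = `|a - b| / a.
  have -> : a^-1 - b^-1 = (b - a) / (a * b) by field; rewrite !gt_eqF.
  rewrite normrM distrC [`|_^-1|]ger0_norm ?invr_ge0 ?mulr_ge0 ?(ltW u_gt0) ?(ltW v_gt0) //.
  by field; rewrite !gt_eqF.
rewrite [`|a^-1|]ger0_norm ?invr_ge0 ?(ltW u_gt0) // mulrC -mulrDl.
rewrite ler_pM2r ?invr_gt0 //.
by have := rvnorm_dist_le u v; lra.
Qed.

End EuclideanNorm.

Section OperatorNorm.
Variables (R : realType) (n : nat).
Implicit Types (E : 'M[R]_n.+1) (x : 'cV[R]_n.+1).

Lemma cvnormE x : cvnorm x = rvnorm x^T.
Proof. by congr Num.sqrt; apply: eq_bigr => i _; rewrite mxE. Qed.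

Lemma cvnorm_delta (j : 'I_n.+1) : cvnorm (delta_mx j 0 : 'cV[R]_n.+1) = 1.
Proof.
rewrite cvnormE trmx_delta /rvnorm (bigD1 j) //= big1 => [|i /negbTE ij].
  by rewrite mxE !eqxx expr1n addr0 sqrtr1.
by rewrite mxE ij andbF expr0n.
Qed.

Lemma has_sup_spnorm E :
  has_sup [set cvnorm (E *m x) | x in [set x | cvnorm x = 1]].
Proof.
split; first by exists (cvnorm (E *m delta_mx ord0 0)), (delta_mx ord0 0);
  rewrite //= cvnorm_delta.
exists (Num.sqrt (\sum_i (\sum_j `|E i j|) ^+ 2)) => _ [x /= x1 <-].
rewrite cvnormE; apply: rvnorm_le => i; rewrite !mxE.
apply: le_trans (ler_norm_sum _ _ _) _; apply: ler_sum => j _.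
rewrite normrM ler_piMr // -x1 cvnormE.
by have := norm_coord_le_rvnorm x^T j; rewrite mxE.
Qed.

Lemma cvnorm_mulmx_le_spnorm E x : cvnorm x = 1 -> cvnorm (E *m x) <= spnorm E.
Proof. by move=> x1; apply: sup_upper_bound (has_sup_spnorm E) _ _; exists x. Qed.

Lemma spnorm_ge0 E : 0 <= spnorm E.
Proof.
apply: le_trans (cvnorm_mulmx_le_spnorm E (cvnorm_delta ord0)).
by rewrite cvnormE rvnorm_ge0.
Qed.

Lemma sum_sqr_le_spnorm E : \sum_i \sum_j E i j ^+ 2 <= n.+1%:R * spnorm E ^+ 2.
Proof.
rewrite exchange_big mulr_natl -[X in _ *+ X]card_ord -sumr_const; apply: ler_sum => j _ /=.
have -> : \sum_i E i j ^+ 2 = cvnorm (E *m delta_mx j 0) ^+ 2.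
  by rewrite -colE cvnormE rvnorm_sqr; apply: eq_bigr => i _; rewrite !mxE.
rewrite ler_sqr ?nnegrE ?spnorm_ge0 ?cvnormE ?rvnorm_ge0 //.
by rewrite -cvnormE cvnorm_mulmx_le_spnorm ?cvnorm_delta.
Qed.

End OperatorNorm.

Section UnitaryWeights.
Variable R : realType.
Local Notation C := R[i].

Definition sqnormc (z : C) : R := complex.Re z ^+ 2 + complex.Im z ^+ 2.

Lemma sqnormc_ge0 z : 0 <= sqnormc z.
Proof. by rewrite addr_ge0 ?sqr_ge0. Qed.

Lemma sqnormcM z w : sqnormc (z * w) = sqnormc z * sqnormc w.
Proof. by case: z w => [x y] [u v]; rewrite /sqnormc /=; ring. Qed.

Lemma sqnormc_real (c : R) : sqnormc c%:C = c ^+ 2.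
Proof. by rewrite /sqnormc /= expr0n addr0. Qed.

Lemma sqnormc_conj z : sqnormc z^* = sqnormc z.
Proof. by case: z => x y; rewrite /sqnormc /= sqrrN. Qed.

Lemma Re_mulcJ z : complex.Re (z * z^*) = sqnormc z.
Proof. by case: z => x y; rewrite /sqnormc /=; ring. Qed.

Lemma Re_sum (I : finType) (F : I -> C) :
  complex.Re (\sum_i F i) = \sum_i complex.Re (F i).
Proof. exact: (@raddf_sum _ _ (@complex.Re R : Rcomplex R -> R)). Qed.

Lemma Re_tr_mul_tC m (A : 'M[C]_m) :
  complex.Re (\tr (A *m A^t*)) = \sum_i \sum_j sqnormc (A i j).
Proof.
rewrite Re_sum; apply: eq_bigr => i _; rewrite mxE Re_sum.
by apply: eq_bigr => j _; rewrite !mxE Re_mulcJ.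
Qed.

Lemma sum_sqnormc_row_unitary m (W : 'M[C]_m) i :
  W \is unitarymx -> \sum_j sqnormc (W i j) = 1.
Proof.
move=> /unitarymxP/matrixP/(_ i i); rewrite !mxE eqxx mulr1n => Wii.
by rewrite -[RHS]/(complex.Re 1) -Wii Re_sum; apply: eq_bigr => j _; rewrite !mxE Re_mulcJ.
Qed.

Lemma sum_sqnormc_col_unitary m (W : 'M[C]_m) j :
  W \is unitarymx -> \sum_i sqnormc (W i j) = 1.
Proof.
rewrite -trmxC_unitary => /(sum_sqnormc_row_unitary j) <-.
by apply: eq_bigr => i _; rewrite !mxE sqnormc_conj.
Qed.

Lemma sum_sqnormc_unitary_mul m (U V A : 'M[C]_m) :
  U \is unitarymx -> V \is unitarymx ->
  \sum_i \sum_j sqnormc ((U *m A *m V^t*) i j) = \sum_i \sum_j sqnormc (A i j).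
Proof.
move=> /unitarymxP UU /unitarymxP VV; rewrite -!Re_tr_mul_tC.
rewrite !trmx_mul !map_mxM !trmxCK !mulmxA -[U *m A *m V^t* *m V]mulmxA.
rewrite (mulmx1C VV) mulmx1 -!mulmxA mxtrace_mulC !mulmxA.
by rewrite -[_ *m U^t* *m U]mulmxA (mulmx1C UU) mulmx1.
Qed.

End UnitaryWeights.

Section SymmetricSpectral.
Variables (R : realType) (n : nat).
Local Notation C := R[i].
Local Notation diagC a := (diag_mx (\row_i (a i)%:C)).

Lemma symmetric_spectral (X : 'M[R]_n.+1) : X^T = X ->
  exists (M : 'M[C]_n.+1) (a : 'I_n.+1 -> R),
   [/\ M \is unitarymx, forall i, eigenvalue X (a i),
       M *m map_mx (real_complex R) X = diagC a *m M &
       forall p : {poly R}, \tr (horner_mx X p) = \sum_i p.[a i]].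
Proof.
move=> symX; set Xc := map_mx (real_complex R) X.
have herm : Xc \is hermsymmx.
  apply/is_hermitianmxP; rewrite expr0 scale1r; apply/matrixP => i j; rewrite !mxE.
  by rewrite -[in RHS]symX mxE; exact: esym (conjc_real _).
have /orthomx_spectralP Xc_diag := hermitian_normalmx herm.
have /mxOverP d_real := hermitian_spectral_diag_real herm.
have M_unitary := spectral_unitarymx Xc.
set M := spectralmx Xc in Xc_diag M_unitary; set d := spectral_diag Xc in Xc_diag d_real.
pose a i := complex.Re (d 0 i).
have da : d = \row_i (a i)%:C.
  by apply/rowP => i; rewrite mxE /a complexRe; apply/esym/Creal_ReP/d_real.
have MX : M *m Xc = diagC a *m M.
  by rewrite -da {1}Xc_diag !mulmxA mulmxV ?spectral_unit // mul1mx.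
exists M, a; split => // [i|p].
  rewrite eigenvalue_root_char -(fmorph_root (real_complex R)) map_char_poly.
  rewrite -eigenvalue_root_char; apply/eigenvalueP; exists (row i M).
    by rewrite -row_mul MX mul_diag_mx; apply/rowP => j; rewrite !mxE.
  apply/eqP => /rowP Mi0; have := sum_sqnormc_row_unitary i M_unitary.
  rewrite big1 => [/esym/eqP|j _]; first by rewrite oner_eq0.
  by have := Mi0 j; rewrite !mxE => ->; rewrite /sqnormc expr0n addr0.
apply: (@complexI R).
rewrite -trace_map_mx map_horner_mx -/Xc Xc_diag horner_mx_uconjC ?spectral_unit //.
rewrite mxtrace_mulC !mulmxA mulmxV ?spectral_unit // mul1mx horner_mx_diag mxtrace_diag.
rewrite rmorph_sum; apply: eq_bigr => i _; rewrite !mxE da mxE.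
exact: horner_map.
Qed.

End SymmetricSpectral.

Section TraceLipschitz.
Variables (R : realType) (n : nat).
Local Notation C := R[i].
Local Notation diagC a := (diag_mx (\row_i (a i)%:C)).
Local Notation toC := (map_mx (real_complex R)).
Variables (M N : 'M[C]_n.+1) (a b : 'I_n.+1 -> R) (X Y : 'M[R]_n.+1).
Hypotheses (M_unitary : M \is unitarymx) (N_unitary : N \is unitarymx).
Hypotheses (MX : M *m toC X = diagC a *m M) (NY : N *m toC Y = diagC b *m N).

Let W := M *m N^t*.

Lemma coupling_unitary : W \is unitarymx.
Proof. by rewrite mul_unitarymx ?trmxC_unitary. Qed.

Lemma sum_coupling_sqr :
  \sum_i \sum_l sqnormc (W i l) * (a i - b l) ^+ 2 = \sum_i \sum_j (X - Y) i j ^+ 2.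
Proof.
have conj_diff : M *m toC (X - Y) *m N^t* = diagC a *m W - W *m diagC b.
  rewrite map_mxB mulmxBr mulmxBl; congr (_ - _); first by rewrite MX -mulmxA.
  rewrite -{1}(mulmx1 M) -(mulmx1C (unitarymxP N_unitary)) -!mulmxA /W.
  by congr (_ *m (_ *m _)); rewrite mulmxA NY -mulmxA (unitarymxP N_unitary) mulmx1.
have -> : \sum_i \sum_j (X - Y) i j ^+ 2 = \sum_i \sum_j sqnormc (toC (X - Y) i j).
  by apply: eq_bigr => i _; apply: eq_bigr => j _; rewrite [in RHS]mxE sqnormc_real.
rewrite -(sum_sqnormc_unitary_mul (toC (X - Y)) M_unitary N_unitary) conj_diff.
apply: eq_bigr => i _; apply: eq_bigr => l _.
rewrite mul_diag_mx mul_mx_diag !mxE; set w := \sum_j _.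
by rewrite [w * _]mulrC -mulrBl -rmorphB sqnormcM sqnormc_real mulrC.
Qed.

Lemma sum_coupling_abs_le :
  \sum_i \sum_l sqnormc (W i l) * `|a i - b l| <= n.+1%:R * spnorm (X - Y).
Proof.
have mass : \sum_i \sum_l sqnormc (W i l) = n.+1%:R.
  under eq_bigr do rewrite sum_sqnormc_row_unitary ?coupling_unitary //.
  by rewrite sumr_const card_ord.
have := sum_coupling_sqr; rewrite pair_bigA /= => frob.
rewrite pair_bigA /= in mass; rewrite pair_bigA /=.
have := weighted_sum_norm_le (fun p => a p.1 - b p.2) (fun p => sqnormc_ge0 (W p.1 p.2)).
rewrite mass frob => cs.
rewrite -ler_sqr ?nnegrE; last 2 first.
- by apply: sumr_ge0 => p _; rewrite mulr_ge0 ?sqnormc_ge0.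
- by rewrite mulr_ge0 ?spnorm_ge0.
apply: le_trans cs _; rewrite exprMn expr2 -mulrA ler_wpM2l //.
exact: sum_sqr_le_spnorm.
Qed.

End TraceLipschitz.

Lemma tr_horner_lipschitz (R : realType) n (S : R -> Prop) (p : {poly R}) (L : R)
    (X Y : 'M[R]_n.+1) :
  X^T = X -> Y^T = Y ->
  (forall a, eigenvalue X a -> S a) -> (forall a, eigenvalue Y a -> S a) ->
  0 <= L -> (forall a b, S a -> S b -> `|p.[a] - p.[b]| <= L * `|a - b|) ->
  `|\tr (horner_mx X p) - \tr (horner_mx Y p)| <= n.+1%:R * L * spnorm (X - Y).
Proof.
move=> symX symY XS YS L_ge0 p_lip.
have [M [a [Mu Xa MX ->]]] := symmetric_spectral symX.
have [N [b [Nu Yb NY ->]]] := symmetric_spectral symY.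
have Wu := coupling_unitary Mu Nu; set W := M *m N^t* in Wu *.
rewrite (sumB_doubly_stochastic (fun i => p.[a i]) (fun l => p.[b l])
  (fun i => sum_sqnormc_row_unitary i Wu) (fun l => sum_sqnormc_col_unitary l Wu)).
apply: le_trans (_ : L * \sum_i \sum_l sqnormc (W i l) * `|a i - b l| <= _).
  rewrite mulr_sumr; apply: le_trans (ler_norm_sum _ _ _) _; apply: ler_sum => i _.
  rewrite mulr_sumr; apply: le_trans (ler_norm_sum _ _ _) _; apply: ler_sum => l _.
  rewrite normrM ger0_norm ?sqnormc_ge0 // mulrCA ler_wpM2l ?sqnormc_ge0 //.
  by apply: p_lip; [apply: XS | apply: YS].
by rewrite [n.+1%:R * L]mulrC -mulrA ler_wpM2l // (sum_coupling_abs_le Mu Nu MX NY).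
Qed.

Section ExponentialSums.
Variable R : realType.
Implicit Types (eta r : R).

Lemma geometric_sum_le r m : 0 <= r < 1 -> \sum_(k < m) r ^+ k <= (1 - r)^-1.
Proof.
case/andP=> r_ge0 r_lt1; have r1_gt0 : 0 < 1 - r by rewrite subr_gt0.
have geo : (1 - r) * \sum_(k < m) r ^+ k = 1 - r ^+ m.
  by rewrite -opprB mulNr -subrX1 opprB.
rewrite -(ler_pM2l r1_gt0) geo mulfV ?gt_eqF //.
by rewrite lerBlDr lerDl exprn_ge0.
Qed.

Lemma pow4_le_expR (x : R) : 0 <= x -> x ^+ 4 <= 24 * expR x.
Proof.
move=> x_ge0; have := expR_ge1Dxn 3 x_ge0.
rewrite -ler_pdivrMl; last lra.
by apply: le_trans; rewrite (_ : 4`!%:R = 24 :> R) // mulrC lerDr ler01.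
Qed.

Lemma expR_mul_pow4_le eta k : 0 < eta ->
  expR (- (2 * eta * k%:R)) * k%:R ^+ 4 <= 24 / eta ^+ 4 * expR (- eta) ^+ k.
Proof.
move=> eta_gt0; pose x := eta * k%:R.
have -> : expR (- eta) ^+ k = expR (- x) by rewrite -expRM_natl mulrN mulrC.
have -> : expR (- (2 * eta * k%:R)) = expR (- x) * expR (- x).
  by rewrite -expRD; congr expR; rewrite /x; ring.
have -> : k%:R ^+ 4 = x ^+ 4 / eta ^+ 4.
  by rewrite /x exprMn mulrC mulKf // expf_neq0 // gt_eqF.
have x4_le : expR (- x) * x ^+ 4 <= 24.
  have x_ge0 : 0 <= x := mulr_ge0 (ltW eta_gt0) (ler0n _ k).
  have := ler_wpM2l (expR_ge0 (- x)) (pow4_le_expR x_ge0).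
  by rewrite [_ * (24 * _)]mulrCA -expRD addNr expR0 mulr1.
have -> : expR (- x) * expR (- x) * (x ^+ 4 / eta ^+ 4)
    = expR (- x) * x ^+ 4 * (expR (- x) / eta ^+ 4) by ring.
have -> : 24 / eta ^+ 4 * expR (- x) = 24 * (expR (- x) / eta ^+ 4) by ring.
by rewrite ler_wpM2r // divr_ge0 ?expR_ge0 ?exprn_ge0 ?(ltW eta_gt0).
Qed.

Lemma sum_expR_pow4_le eta K : 0 < eta ->
  \sum_(k < K) expR (- (2 * eta * k%:R)) * k%:R ^+ 4 <= 24 / eta ^+ 5.
Proof.
move=> eta_gt0; have c_ge0 : 0 <= 24 / eta ^+ 4 by rewrite divr_ge0 ?exprn_ge0 ?ltW.
case: K => [|m]; first by rewrite big_ord0 divr_ge0 ?exprn_ge0 ?ltW.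
rewrite big_ord_recl /= expr0n mulr0 add0r; set r := expR (- eta).
have r_gt0 : 0 < r := expR_gt0 _.
have r_eta : r * (1 + eta) <= 1.
  have := ler_wpM2l (ltW r_gt0) (expR_ge1Dx eta).
  by rewrite /r -expRD addNr expR0.
have r_lt1 : r < 1 by have := mulr_gt0 r_gt0 eta_gt0; lra.
have geo : r * \sum_(k < m) r ^+ k <= eta^-1.
  have r01 : 0 <= r < 1 by rewrite ltW.
  apply: le_trans (ler_wpM2l (ltW r_gt0) (geometric_sum_le m r01)) _.
  by rewrite ler_pdivrMr ?subr_gt0 // mulrC ler_pdivlMr //; lra.
apply: le_trans (_ : \sum_(k < m) 24 / eta ^+ 4 * r ^+ k.+1 <= _).
  by apply: ler_sum => k _; rewrite /bump /= add1n expR_mul_pow4_le.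
under eq_bigr do rewrite (exprS r); rewrite -mulr_sumr -mulr_sumr.
apply: le_trans (ler_wpM2l c_ge0 geo) _.
by rewrite -mulrA -invfM -exprSr.
Qed.

Lemma powR_neg_five_halves_sqr eta : 0 < eta ->
  (eta `^ (- (5%:R / 2))) ^+ 2 = (eta ^+ 5)^-1.
Proof.
move=> eta_gt0; rewrite -powR_mulrn ?powR_ge0 // -powRrM.
have -> : - (5%:R / 2) * 2%:R = - 5%:R :> R by field.
by rewrite powRN powR_mulrn // ltW.
Qed.

Lemma sqrt_sum_expR_pow4_le eta K : 0 < eta ->
  Num.sqrt (\sum_(k < K) expR (- (2 * eta * k%:R)) * k%:R ^+ 4)
    <= 5 * eta `^ (- (5%:R / 2)).
Proof.
move=> eta_gt0; have P_ge0 : 0 <= 5 * eta `^ (- (5%:R / 2)) by rewrite mulr_ge0 ?powR_ge0.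
rewrite -[leRHS]ger0_norm // -sqrtr_sqr ler_sqrt ?sqr_ge0 //.
rewrite exprMn powR_neg_five_halves_sqr //.
apply: le_trans (sum_expR_pow4_le K eta_gt0) _.
by rewrite ler_wpM2r ?invr_ge0 ?exprn_ge0 ?(ltW eta_gt0) //; lra.
Qed.

End ExponentialSums.

Section ChebyshevFeatures.
Variables (R : realType) (n : nat) (eps eta : R).
Implicit Types (M A B : 'M[R]_n.+1).

Lemma normalize_symmetric M : is_symmetric M -> (normalize eps M)^T = normalize eps M.
Proof. by move=> symM; rewrite /normalize linearZ /= linearB /= tr_scalar_mx symM. Qed.

Lemma s_coef0 M : s_coef eps eta M 0 = n.+1%:R.
Proof. by rewrite /s_coef mulr0 expR0 mul1r /chebmx cheb0 rmorph1 mxtrace1. Qed.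

Lemma rvnorm_s_vec_ge M K : (0 < K)%N -> n.+1%:R <= rvnorm (s_vec eps eta M K).
Proof.
move=> K_gt0; have := norm_coord_le_rvnorm (s_vec eps eta M K) (Ordinal K_gt0).
by rewrite mxE s_coef0 ger0_norm.
Qed.

Lemma rvnorm_s_vec_sub_le A B K (c : R) : 0 <= c ->
  (forall k, `|\tr (chebmx k (normalize eps A)) - \tr (chebmx k (normalize eps B))|
     <= c * k%:R ^+ 2) ->
  rvnorm (s_vec eps eta A K - s_vec eps eta B K)
    <= c * Num.sqrt (\sum_(k < K) expR (- (2 * eta * k%:R)) * k%:R ^+ 4).
Proof.
move=> c_ge0 tr_le; rewrite -[c]ger0_norm // -sqrtr_sqr -sqrtrM ?sqr_ge0 // mulr_sumr.
have -> : \sum_(k < K) c ^+ 2 * (expR (- (2 * eta * k%:R)) * k%:R ^+ 4)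
    = \sum_(k < K) (expR (- eta * k%:R) * (c * k%:R ^+ 2)) ^+ 2.
  apply: eq_bigr => k _; rewrite exprMn -expRM_natl.
  rewrite (_ : 2%:R * (- eta * k%:R) = - (2 * eta * k%:R)); last by ring.
  by ring.
apply: rvnorm_le => k; rewrite !mxE /s_coef -mulrBr normrM ger0_norm ?expR_ge0 //.
by rewrite ler_wpM2l ?expR_ge0.
Qed.

Lemma rvnorm_phi_sub_le A B K : (0 < K)%N ->
  rvnorm (phi eps eta A K - phi eps eta B K)
    <= 2 * rvnorm (s_vec eps eta A K - s_vec eps eta B K) / rvnorm (s_vec eps eta A K).
Proof.
move=> K_gt0; apply: rvnorm_normalized_sub_le;
  by apply: lt_le_trans (rvnorm_s_vec_ge _ K_gt0).
Qed.

Variables (A B : 'M[R]_n.+1).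
Hypotheses (symA : is_symmetric A) (symB : is_symmetric B).
Hypotheses (specA : forall a, eigenvalue (normalize eps A) a -> -1 <= a <= 1).
Hypotheses (specB : forall a, eigenvalue (normalize eps B) a -> -1 <= a <= 1).

Lemma tr_cheb_normalize_sub_le k :
  `|\tr (chebmx k (normalize eps A)) - \tr (chebmx k (normalize eps B))|
    <= n.+1%:R * spnorm (normalize eps A - normalize eps B) * k%:R ^+ 2.
Proof.
rewrite mulrAC; apply: tr_horner_lipschitz specA specB _ (@cheb_lipschitz R k);
  by rewrite ?normalize_symmetric ?exprn_ge0.
Qed.

Lemma rvnorm_phi_sub_le_spnorm K : (0 < K)%N ->
  rvnorm (phi eps eta A K - phi eps eta B K)
    <= n.+1%:R / rvnorm (s_vec eps eta A K)
       * (2 * Num.sqrt (\sum_(k < K) expR (- (2 * eta * k%:R)) * k%:R ^+ 4))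
       * spnorm (normalize eps A - normalize eps B).
Proof.
move=> K_gt0; set S := Num.sqrt _; set s := spnorm _.
set U := rvnorm (s_vec eps eta A K).
have U_gt0 : 0 < U := lt_le_trans (ltr0Sn _ _) (rvnorm_s_vec_ge A K_gt0).
have s_ge0 : 0 <= s := spnorm_ge0 _.
apply: le_trans (@rvnorm_phi_sub_le A B K K_gt0) _; rewrite -/U.
have := @rvnorm_s_vec_sub_le A B K _ (mulr_ge0 (ler0n _ n.+1) s_ge0) tr_cheb_normalize_sub_le.
rewrite -/S => d_le; have -> : n.+1%:R / U * (2 * S) * s = 2 * (n.+1%:R * s * S) / U.
  by rewrite mulrC !mulrA [_ * U^-1]mulrC; ring.
by rewrite ler_pM2r ?invr_gt0 // ler_pM2l.
Qed.

End ChebyshevFeatures.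

Lemma phi_lipschitz_const_le (R : realType) n (eps eta : R) (A : 'M[R]_n.+1) K :
  0 < eta -> (0 < K)%N ->
  n.+1%:R / rvnorm (s_vec eps eta A K)
    * (2 * Num.sqrt (\sum_(k < K) expR (- (2 * eta * k%:R)) * k%:R ^+ 4))
    <= 10%:R * n.+1%:R * eta `^ (- (5%:R / 2)).
Proof.
move=> eta_gt0 K_gt0; set U := rvnorm _.
have U_ge : n.+1%:R <= U := rvnorm_s_vec_ge eps eta A K_gt0.
have U_gt0 : 0 < U := lt_le_trans (ltr0Sn _ _) U_ge.
have q_le1 : n.+1%:R / U <= 1 by rewrite ler_pdivrMr // mul1r.
have q_ge0 : 0 <= n.+1%:R / U by rewrite divr_ge0 ?ltW.
have := sqrt_sum_expR_pow4_le K eta_gt0.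
have := sqrtr_ge0 (\sum_(k < K) expR (- (2 * eta * k%:R)) * k%:R ^+ 4).
have := powR_ge0 eta (- (5%:R / 2)); have : 1 <= n.+1%:R :> R by rewrite ler1n.
nra.
Qed.

Theorem theorem3 :
  exists Cbig : nat,
  forall (R : realType) (n : nat) (eps eta : R) (A B : 'M[R]_n.+1),
    0 < eps -> 0 < eta ->
    is_symmetric A -> is_symmetric B ->
    (forall a, eigenvalue (normalize eps A) a -> -1 <= a <= 1) ->
    (forall a, eigenvalue (normalize eps B) a -> -1 <= a <= 1) ->
    exists CT : R, 0 <= CT /\ CT <= 2 /\
      (forall k : nat,
         `|\tr (chebmx k (normalize eps A)) - \tr (chebmx k (normalize eps B))|
           <= n.+1%:R * CT * k%:R ^+ 2 * spnorm (normalize eps A - normalize eps B)) /\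
      (forall K : nat, (1 <= K)%N ->
         let bound :=
           n.+1%:R / rvnorm (s_vec eps eta A K)
           * Num.sqrt (\sum_(k < K) expR (- (2 * eta * k%:R)) * CT ^+ 2 * k%:R ^+ 4)
           * spnorm (normalize eps A - normalize eps B) in
         rvnorm (phi eps eta A K - phi eps eta B K) <= bound /\
         bound <= Cbig%:R * n.+1%:R * eta `^ (- (5%:R / 2))
                    * spnorm (normalize eps A - normalize eps B)).
Proof.
exists 10 => R n eps eta A B _ eta_gt0 symA symB specA specB.
have tr_le := tr_cheb_normalize_sub_le symA symB specA specB.
exists 2; do 2!split=> //; split=> [k|K K_gt0 /=].
  apply: le_trans (tr_le k) _; rewrite mulrAC ler_wpM2r ?spnorm_ge0 //.
  by rewrite [_ * 2]mulrC -mulrA ler_peMl ?mulr_ge0 ?exprn_ge0 ?ler1n.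
have -> : \sum_(k < K) expR (- (2 * eta * k%:R)) * 2 ^+ 2 * k%:R ^+ 4
    = 2 ^+ 2 * \sum_(k < K) expR (- (2 * eta * k%:R)) * k%:R ^+ 4.
  by rewrite mulr_sumr; apply: eq_bigr => k _; ring.
rewrite sqrtrM ?sqr_ge0 // sqrtr_sqr ger0_norm //.
split; first exact: rvnorm_phi_sub_le_spnorm.
by rewrite ler_wpM2r ?spnorm_ge0 // phi_lipschitz_const_le.
Qed.
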